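(* Consider a deterministic sequential oligopoly $\boldsymbol{n}=(n_1,\dots,n_T)$ in which firm $i$ has payoff $x_i\,a_i(\overline{X}_c^i-X)$ with $a_i>0$ and commonly known parameters $\overline{X}_c^i$, and all equilibria considered are interior. Suppose the equilibrium quantities are $(x_1^*,\dots,x_n^* )$ and that these quantities remain the same when one additional firm, with payoff $x_{n+1}a_{n+1}(\overline{X}_c-X)$, is added alone in a new final period $T+1$. Then $\overline{X}_c^i=\overline{X}_c$ for all firms $i=1,\dots,n$.
   Context: $X=\sum_i x_i$ is total quantity. Interpretation: $\overline{X}_c^i=\overline{X}^i-c_i/a_i$ where firm $i$ has constant marginal cost $c_i$ and inverse demand $a_i(\overline{X}^i-X)$. Firms are partitioned into periods $\mathcal{I}_1,\dots,\mathcal{I}_T$; a firm in period $t$ observes the cumulative quantity of all firms in earlier periods and chooses simultaneously with the other firms of period $t$; equilibrium is subgame perfect. *)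

(* Sequential oligopoly with linear demand, payoffs
   x_i * a_i * (Xc_i - X), firms indexed by a finite type I,
   period of firm i given by p i : nat (periods played in increasing order). *)
From HB Require Import structures.
From mathcomp Require Import all_boot all_order all_algebra.
Set Implicit Arguments. Unset Strict Implicit. Unset Printing Implicit Defensive.
Import Order.TTheory GRing.Theory Num.Theory.
Local Open Scope ring_scope.

Section Oligopoly.
Variables (R : realFieldType) (I : finType).

Definition horizon (p : I -> nat) : nat := (\max_(j : I) p j).+1.

(* A strategy of firm i : a map from the cumulative quantity of all firms
   in earlier periods (what firm i observes) to its own quantity.
   [cum p s t q k] = cumulative quantity just before period t+k, when the
   play starts at (the beginning of) period t with cumulative quantity q
   and all firms follow s. *)
Fixpoint cum (p : I -> nat) (s : I -> R -> R) (t : nat) (q : R) (k : nat) : R :=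
  match k with
  | 0 => q
  | k'.+1 => let c := cum p s t q k' in
             c + \sum_(j : I | p j == (t + k')%N) s j c
  end.

Definition total (p : I -> nat) (s : I -> R -> R) (t : nat) (q : R) : R :=
  cum p s t q (horizon p - t).

Definition payoff (p : I -> nat) (a Xc : I -> R) (s : I -> R -> R)
    (i : I) (q : R) : R :=
  s i q * (a i * (Xc i - total p s (p i) q)).

Definition deviate (s : I -> R -> R) (i : I) (y : R) : I -> R -> R :=
  fun j => if j == i then (fun _ => y) else s j.

(* subgame perfect equilibrium: at every information set (period of i,
   observed cumulative quantity q), firm i's choice is a best response to
   the simultaneous choices of its period-mates and the strategies of
   later firms.  Quantities range over all of R (interior equilibria). *)
Definition is_SPE (p : I -> nat) (a Xc : I -> R) (s : I -> R -> R) : Prop :=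
  forall (i : I) (q y : R), payoff p a Xc (deviate s i y) i q <= payoff p a Xc s i q.

Definition outcome (p : I -> nat) (s : I -> R -> R) (i : I) : R :=
  s i (cum p s 0 0 (p i)).

Definition ext_period (p : I -> nat) : option I -> nat :=
  fun o => match o with Some i => p i | None => horizon p end.

Definition ext_param (f : I -> R) (fnew : R) : option I -> R :=
  fun o => match o with Some i => f i | None => fnew end.

End Oligopoly.

From Pilot Require Import Defs.
From HB Require Import structures.
From mathcomp Require Import all_boot all_order all_algebra.
From mathcomp Require Import ring lra.
Set Implicit Arguments. Unset Strict Implicit. Unset Printing Implicit Defensive.
Import Order.TTheory GRing.Theory Num.Theory.
Local Open Scope ring_scope.

(* In a subgame perfect equilibrium with linear demand, the
   play from the start of period t is affine in the incoming cumulative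
   quantity q, with slope [tail_slope p t] = prod_(u >= t) 1/(n_u + 1),
   n_u being the number of firms of period u.  Firm i's best response then
   gives the first-order condition
       Xc_i - X = tail_slope p (p i).+1 * x_i                      (FOC)
   where X is the total quantity.  Appending a lone last firm halves every
   tail slope, adds z = x_{n+1} to the total, and the new firm's own FOC
   reads Xcnew - (X + z) = z.  If the quantities of the old firms are
   unchanged, their FOCs in both games give Xc_i - (X + z) = (Xc_i - X)/2,
   so Xc_i - X = 2 z = Xcnew - X. *)

Lemma big_option_split (T : Type) (idx : T) (op : Monoid.com_law idx)
    (I : finType) (P : pred (option I)) (F : option I -> T) :
  \big[op/idx]_(o | P o) F o =
  op (if P None then F None else idx) (\big[op/idx]_(j | P (Some j)) F (Some j)).
Proof.
rewrite big_mkcond (bigD1 None) //=; congr (op _ _).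
rewrite (reindex_omap Some id) //=; last by case.
by rewrite [RHS]big_mkcond; apply: eq_bigl => j; rewrite eqxx.
Qed.

Lemma lt_horizon (I : finType) (p : I -> nat) (i : I) : (p i < horizon p)%N.
Proof. by rewrite ltnS leq_bigmax. Qed.

Section CumulativePlay.
Variables (R : realFieldType) (I : finType).
Implicit Types (p : I -> nat) (s : I -> R -> R).

Lemma cum_add p s t q m k :
  cum p s t q (m + k) = cum p s (t + m) (cum p s t q m) k.
Proof. by elim: k => [|k IH]; rewrite ?addn0 // addnS /= IH addnA. Qed.

Lemma cum_ext p s s2 t q k :
  (forall j, (t <= p j)%N -> s j = s2 j) -> cum p s t q k = cum p s2 t q k.
Proof.
move=> eq_s; elim: k => [|k IH] //=; rewrite IH; congr (_ + _).
by apply: eq_bigr => j /eqP pj; rewrite eq_s // pj leq_addr.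
Qed.

Lemma cum_first p s t q k :
  cum p s t q k.+1 = cum p s t.+1 (q + \sum_(j | p j == t) s j q) k.
Proof. by rewrite -add1n cum_add addn1 /= addn0. Qed.

Lemma total_from_path p s t : (t <= horizon p)%N ->
  Defs.total p s t (cum p s 0 0 t) = cum p s 0 0 (horizon p).
Proof. by move=> le_tH; rewrite /Defs.total -{1}(add0n t) -cum_add subnKC. Qed.

End CumulativePlay.

Lemma argmax_linear_demand (R : realFieldType) (a c K x : R) :
  0 < a -> 0 < c ->
  (forall y, y * (a * (K - c * y)) <= x * (a * (K - c * x))) ->
  K - c * x = c * x.
Proof.
move=> a_gt0 c_gt0 x_max.
set w := K / (c * 2).
have c2_neq0 : c * 2 != 0 by rewrite mulf_neq0 ?pnatr_eq0 // gt_eqF.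
have K_w : K = c * 2 * w by rewrite /w mulrC divfK.
have gap : a * c * (w - x) ^+ 2 =
    w * (a * (K - c * w)) - x * (a * (K - c * x)) by rewrite K_w; ring.
have sq_le0 : (w - x) ^+ 2 <= 0.
  by rewrite -(pmulr_rle0 _ (mulr_gt0 a_gt0 c_gt0)) gap subr_le0.
have /eqP : (w - x) ^+ 2 = 0 by apply/le_anti; rewrite sq_le0 sqr_ge0.
by rewrite sqrf_eq0 subr_eq0 => /eqP w_x; rewrite K_w w_x; ring.
Qed.

Section Slopes.
Variables (R : realFieldType) (I : finType) (p : I -> nat).

Definition firms_at (t : nat) : R := \sum_(j | p j == t) 1.

(* Slope of the play of k periods starting at period t with respect to the
   incoming cumulative quantity: prod_(t <= u < t + k) 1 / (n_u + 1). *)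
Fixpoint slope (t k : nat) : R :=
  if k is k'.+1 then slope t.+1 k' / (firms_at t + 1) else 1.

Definition tail_slope (t : nat) : R := slope t (horizon p - t).

Lemma firms_at_ge0 t : 0 <= firms_at t.
Proof. by apply: sumr_ge0 => j _; rewrite ler01. Qed.

Lemma slope_gt0 k t : 0 < slope t k.
Proof.
elim: k t => [|k IH] t /=; first exact: ltr01.
by rewrite divr_gt0 // ltr_wpDl ?firms_at_ge0 ?ltr01.
Qed.

End Slopes.

Section Equilibrium.
Variables (R : realFieldType) (I : finType) (p : I -> nat) (a Xc : I -> R)
  (s : I -> R -> R).
Hypothesis a_gt0 : forall i, 0 < a i.
Hypothesis spe : is_SPE p a Xc s.
Local Notation H := (horizon p).

(* If the play of the k periods after t is affine, with slope
   c = [slope R p t.+1 k], then each firm of period t, best-responding to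
   its period-mates, satisfies the first-order condition Xc_i - X = c x_i
   of its quadratic payoff. *)
Lemma foc_of_affine_tail t k al : (t + k.+1 = H)%N ->
  (forall q, cum p s t.+1 q k = al + slope R p t.+1 k * q) ->
  forall i, p i = t ->
  forall q, Xc i - cum p s t q k.+1 = slope R p t.+1 k * s i q.
Proof.
move=> tkH tail_affine i pi q.
set c := slope R p t.+1 k.
set B := q + \sum_(j | (p j == t) && (j != i)) s j q.
have play_of : forall s2 : I -> R -> R, (forall j, j != i -> s2 j = s j) ->
    cum p s2 t q k.+1 = al + c * (B + s2 i q).
  move=> s2 eq_s2; rewrite cum_first -(cum_ext _ _ (s := s)); last first.
    by move=> j lt_tj; rewrite eq_s2 //; apply: contraTneq lt_tj => ->; rewrite pi ltnn.
  rewrite tail_affine (bigD1 i) /=; last by rewrite pi.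
  rewrite /B (eq_bigr (s ^~ q)); first by congr (_ + _ * _); ring.
  by move=> j /andP [_ ji]; rewrite eq_s2.
set K := Xc i - al - c * B.
have shape y : Xc i - (al + c * (B + y)) = K - c * y by rewrite /K; ring.
have horizon_i : (H - p i)%N = k.+1 by rewrite -tkH pi addKn.
rewrite (play_of s) // shape; apply: argmax_linear_demand (a_gt0 i) _ _.
  exact: slope_gt0.
move=> y; have := spe i q y; rewrite /payoff /Defs.total horizon_i pi.
rewrite !play_of // => [|j ji]; last by rewrite /deviate (negbTE ji).
by rewrite /deviate eqxx !shape.
Qed.

Lemma cum_affine k : forall t, (t + k = H)%N ->
  exists al, forall q, cum p s t q k = al + slope R p t k * q.
Proof.
elim: k => [|k IH] t tkH; first by exists 0 => q; rewrite add0r mul1r.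
have [|al tail_affine] := IH t.+1; first by rewrite addSnnS.
have foc := foc_of_affine_tail tkH tail_affine.
set c := slope R p t.+1 k; set n := firms_at R p t.
set XcS := \sum_(j | p j == t) Xc j.
exists (al + (XcS - n * al) / (n + 1)) => q.
set S := \sum_(j | p j == t) s j q.
have play : cum p s t q k.+1 = al + c * (q + S) by rewrite cum_first tail_affine.
(* summing the first-order conditions of the firms of period t *)
have sum_foc : XcS - n * (al + c * (q + S)) = c * S.
  have : \sum_(j | p j == t) (Xc j - cum p s t q k.+1) =
         \sum_(j | p j == t) c * s j q by apply: eq_bigr => j /eqP pj; rewrite foc.
  rewrite sumrB -mulr_sumr -/S -/XcS play => <-; congr (_ - _).
  by rewrite /n /firms_at mulr_suml; apply: eq_bigr => j _; rewrite mul1r.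
have n1_neq0 : n + 1 != 0 by rewrite gt_eqF // ltr_wpDl ?firms_at_ge0 ?ltr01.
have -> : XcS = n * (al + c * (q + S)) + c * S by rewrite -sum_foc; ring.
by rewrite play /= -/n -/c; field.
Qed.

Lemma first_order_condition i q :
  Xc i - Defs.total p s (p i) q = tail_slope R p (p i).+1 * s i q.
Proof.
have lt_iH := lt_horizon p i.
have [al tail_affine] := @cum_affine (H - (p i).+1) (p i).+1 (subnKC lt_iH).
rewrite /Defs.total /tail_slope -(foc_of_affine_tail _ tail_affine) //.
  by rewrite subnS prednK // subn_gt0.
by rewrite addnS -addSn subnKC.
Qed.

End Equilibrium.

Section ExtendedSlopes.
Variables (R : realFieldType) (I : finType) (p : I -> nat).
Local Notation H := (horizon p).
Local Notation pe := (ext_period p).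

Lemma horizon_ext : horizon pe = H.+1.
Proof.
rewrite {1}/horizon big_option_split /=; congr _.+1; apply/maxn_idPl.
by apply/bigmax_leqP => j _; rewrite ltnW // lt_horizon.
Qed.

Lemma firms_at_ext_old t : (t < H)%N -> firms_at R pe t = firms_at R p t.
Proof. by move=> lt_tH; rewrite /firms_at big_option_split /= gtn_eqF ?add0r. Qed.

Lemma firms_at_ext_last : firms_at R pe H = 1.
Proof.
rewrite /firms_at big_option_split /= eqxx big_pred0 ?addr0 // => j.
by rewrite ltn_eqF // lt_horizon.
Qed.

(* The lone last firm contributes the factor 1 / (1 + 1) to every slope. *)
Lemma slope_ext k : forall t, (t + k = H)%N ->
  slope R pe t k.+1 = slope R p t k / 2.
Proof.
elim: k => [|k IH] t tkH.
  by rewrite addn0 in tkH; rewrite /= tkH firms_at_ext_last div1r.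
change (slope R pe t.+1 k.+1 / (firms_at R pe t + 1) =
        slope R p t.+1 k / (firms_at R p t + 1) / 2).
rewrite IH ?addSnnS // firms_at_ext_old; last by rewrite -tkH -addSnnS leq_addr.
by rewrite -!mulrA [2^-1 * _]mulrC.
Qed.

Lemma tail_slope_ext t : (t <= H)%N -> tail_slope R pe t = tail_slope R p t / 2.
Proof.
move=> le_tH; rewrite /tail_slope horizon_ext subSn // slope_ext //.
exact: subnKC.
Qed.

End ExtendedSlopes.

Section ExtendedPath.
Variables (R : realFieldType) (I : finType) (p : I -> nat).
Variables (s : I -> R -> R) (s' : option I -> R -> R).
Local Notation H := (horizon p).
Local Notation pe := (ext_period p).

Lemma cum_ext_last q : cum pe s' H q 1 = q + s' None q.
Proof.
rewrite /= addn0 big_option_split /= eqxx big_pred0 ?addr0 // => j.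
by rewrite ltn_eqF // lt_horizon.
Qed.

Hypothesis same_outcome :
  forall i, outcome pe s' (Some i) = outcome p s i.

Lemma ext_path k : (k <= H)%N -> cum pe s' 0 0 k = cum p s 0 0 k.
Proof.
elim: k => [//|k IH] lt_kH.
rewrite [LHS]/= [RHS]/= IH; last exact: ltnW.
congr (_ + _); rewrite big_option_split /= add0n (gtn_eqF lt_kH) add0r.
apply: eq_bigr => j /eqP pj.
have := same_outcome j; rewrite /outcome /= pj IH; last exact: ltnW.
by move=> ->.
Qed.

Lemma ext_choice i :
  s' (Some i) (cum p s 0 0 (p i)) = s i (cum p s 0 0 (p i)).
Proof.
have := same_outcome i; rewrite /outcome /= ext_path => [-> //|].
exact: ltnW (lt_horizon p i).
Qed.

Lemma ext_total_from_path i (X := cum p s 0 0 H) :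
  Defs.total pe s' (p i) (cum p s 0 0 (p i)) = X + s' None X.
Proof.
have le_iH := ltnW (lt_horizon p i).
rewrite -(ext_path le_iH) total_from_path; last by rewrite horizon_ext (leqW le_iH).
by rewrite horizon_ext -addn1 cum_add add0n (ext_path (leqnn _)) cum_ext_last.
Qed.

End ExtendedPath.

Lemma last_firm_foc (R : realFieldType) (I : finType) (p : I -> nat)
    (a Xc : I -> R) (anew Xcnew : R) (s' : option I -> R -> R) :
  (forall o, 0 < ext_param a anew o) ->
  is_SPE (ext_period p) (ext_param a anew) (ext_param Xc Xcnew) s' ->
  forall q, Xcnew - (q + s' None q) = s' None q.
Proof.
move=> a_gt0 spe q; have := first_order_condition a_gt0 spe None q.
rewrite [ext_param _ _ _]/= /Defs.total /tail_slope horizon_ext subnn.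
by rewrite subSn // subnn cum_ext_last [slope _ _ _ 0]/= mul1r.
Qed.

Theorem proposition4 (R : realFieldType) (I : finType) (p : I -> nat)
    (a Xc : I -> R) (anew Xcnew : R)
    (s : I -> R -> R) (s' : option I -> R -> R) :
  (forall i, 0 < a i) -> 0 < anew ->
  is_SPE p a Xc s ->
  is_SPE (ext_period p) (ext_param a anew) (ext_param Xc Xcnew) s' ->
  (forall i, outcome (ext_period p) s' (Some i) = outcome p s i) ->
  forall i, Xc i = Xcnew.
Proof.
move=> a_gt0 anew_gt0 spe spe' same_outcome i.
have a'_gt0 : forall o, 0 < ext_param a anew o by case.
have le_iH := ltnW (lt_horizon p i).
have foc_old := first_order_condition a_gt0 spe i (cum p s 0 0 (p i)).
rewrite total_from_path in foc_old; last exact: le_iH.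
have foc_ext := first_order_condition a'_gt0 spe' (Some i) (cum p s 0 0 (p i)).
rewrite /= (ext_total_from_path same_outcome) (ext_choice same_outcome) in foc_ext.
rewrite tail_slope_ext in foc_ext; last exact: lt_horizon.
have foc_new := last_firm_foc a'_gt0 spe' (cum p s 0 0 (horizon p)).
move: foc_old foc_ext foc_new.
set X := cum p s 0 0 _; set z := s' None X; set x := s i _.
set c := tail_slope R p (p i).+1 => foc_old foc_ext foc_new.
have : Xc i - (X + z) = (Xc i - X) / 2 by rewrite foc_ext foc_old; ring.
lra.
Qed.
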